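(* Let $R \subseteq S$ be an extension of commutative rings, and let $R^*$ be the strict closure of $R$ in $S$. Then $R^* \subseteq R + MS$ (inside $S$) for every maximal ideal $M$ of $R$.
   Context: For an extension of commutative rings $R \subseteq S$, the strict closure of $R$ in $S$ is $R^* = \{\alpha \in S \mid \alpha\otimes 1 = 1\otimes \alpha \text{ in } S\otimes_R S\}$; it is a subring of $S$ containing $R$. *)

From mathcomp Require Import all_boot all_order all_algebra.
Set Implicit Arguments. Unset Strict Implicit. Unset Printing Implicit Defensive.
Import Order.TTheory GRing.Theory Num.Theory.
Local Open Scope ring_scope.

Section Defs.
Variable S : comPzRingType.

Record is_subring (R : S -> Prop) : Prop := {
  subring1 : R 1;
  subringB : forall x y, R x -> R y -> R (x - y);
  subringM : forall x y, R x -> R y -> R (x * y) }.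

Record is_ideal_of (R M : S -> Prop) : Prop := {
  ideal_sub : forall x, M x -> R x;
  ideal0 : M 0;
  idealD : forall x y, M x -> M y -> M (x + y);
  idealN : forall x, M x -> M (- x);
  idealMl : forall r x, R r -> M x -> M (r * x) }.

Definition is_maximal_ideal_of (R M : S -> Prop) : Prop :=
  [/\ is_ideal_of R M, ~ M 1 &
      forall J : S -> Prop, is_ideal_of R J -> (forall x, M x -> J x) ->
        (forall x, J x -> M x) \/ J 1].

(* MS : the ideal of S generated by M (finite sums of m * s, m in M, s in S). *)
Definition ext_ideal (M : S -> Prop) (t : S) : Prop :=
  exists l : seq (S * S), (forall e, e \in l -> M e.1) /\
    t = \sum_(e <- l) e.1 * e.2.

Definition sum_R_ext (R M : S -> Prop) (t : S) : Prop :=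
  exists r u, R r /\ ext_ideal M u /\ t = r + u.

(* Tensor product S (x)_R S as the free Z-module on S * S modulo the
   bilinearity and R-balancing relations.  A formal sum is a list of
   (integer coefficient, generator) pairs; fcoef computes its coefficient. *)
Definition fcoef (l : seq (int * (S * S))) (p : S * S) : int :=
  \sum_(e <- l) (if e.2 == p then e.1 else 0).

Inductive tensor_rel (R : S -> Prop) : seq (int * (S * S)) -> Prop :=
| tensor_rel_addl x x' y :
    tensor_rel R [:: ((1 : int), (x + x', y)); ((-1 : int), (x, y)); ((-1 : int), (x', y))]
| tensor_rel_addr x y y' :
    tensor_rel R [:: ((1 : int), (x, y + y')); ((-1 : int), (x, y)); ((-1 : int), (x, y'))]
| tensor_rel_bal r x y : R r ->
    tensor_rel R [:: ((1 : int), (r * x, y)); ((-1 : int), (x, r * y))].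

(* a and b represent the same element of S (x)_R S: a - b lies in the
   Z-span of the relations. *)
Definition tensor_eq (R : S -> Prop) (a b : seq (int * (S * S))) : Prop :=
  exists gs : seq (int * seq (int * (S * S))),
    (forall g, g \in gs -> tensor_rel R g.2) /\
    forall p, fcoef a p - fcoef b p = \sum_(g <- gs) g.1 * fcoef g.2 p.

Definition tmul (x y : S) : seq (int * (S * S)) := [:: ((1 : int), (x, y))].

Definition strict_closure (R : S -> Prop) (a : S) : Prop :=
  tensor_eq R (tmul a 1) (tmul 1 a).
End Defs.

From mathcomp Require Import all_boot all_order all_algebra.
From mathcomp Require Import ring.
From Stdlib Require Import ClassicalEpsilon.
Set Implicit Arguments. Unset Strict Implicit. Unset Printing Implicit Defensive.
Import GRing.Theory.
Local Open Scope ring_scope.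

(* Let k = R/M.  If 1 lies in MS then R + MS = S and there is
   nothing to prove.  Otherwise S/MS is a k-vector space in which 1 is
   nonzero, so there is a k-linear functional phi on it with phi(1) = 1.
   Lifting phi to a map S -> R, the assignment x (x) y |-> phi(x) y is
   additive in both arguments and R-balanced modulo R + MS, hence it
   factors through S (x)_R S modulo R + MS.  Applied to a (x) 1 = 1 (x) a
   it gives phi(a) - phi(1) a in R + MS, whence a in R + MS.

   To avoid choosing a basis of S/MS we only build phi on the finitely
   generated submodule W = MS + R s_1 + ... + R s_n spanned by the finitely
   many elements occurring in a witness of a (x) 1 = 1 (x) a; it is obtained
   by adjoining the s_i one at a time ('extend_functional'). *)

Section ModuleAlgebra.
Variables (S : comPzRingType) (R M : S -> Prop).
Hypothesis hR : is_subring R.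

Lemma subring0 : R 0.
Proof. by have := subringB hR (subring1 hR) (subring1 hR); rewrite subrr. Qed.

Lemma subringN x : R x -> R (- x).
Proof. by move=> Rx; have := subringB hR subring0 Rx; rewrite sub0r. Qed.

Lemma subringD x y : R x -> R y -> R (x + y).
Proof. by move=> Rx Ry; have := subringB hR Rx (subringN Ry); rewrite opprK. Qed.

Lemma ext_ideal0 : ext_ideal M 0.
Proof. by exists [::]; rewrite big_nil. Qed.

Lemma ext_idealD x y : ext_ideal M x -> ext_ideal M y -> ext_ideal M (x + y).
Proof.
move=> [l1 [Ml1 ->]] [l2 [Ml2 ->]]; exists (l1 ++ l2); split; last by rewrite big_cat.
by move=> e; rewrite mem_cat => /orP [] ?; [apply: Ml1 | apply: Ml2].
Qed.

Lemma ext_idealMl t x : ext_ideal M x -> ext_ideal M (t * x).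
Proof.
move=> [l [Ml ->]]; exists [seq (e.1, t * e.2) | e <- l]; split.
  by move=> e /mapP [e' le' ->] /=; apply: Ml.
by rewrite big_map mulr_sumr; apply: eq_bigr => e _ /=; ring.
Qed.

Lemma ext_idealN x : ext_ideal M x -> ext_ideal M (- x).
Proof. by move=> MSx; have := ext_idealMl (-1) MSx; rewrite mulN1r. Qed.

Lemma ext_ideal_gen m s : M m -> ext_ideal M (m * s).
Proof.
move=> Mm; exists [:: (m, s)]; split; last by rewrite big_seq1.
by move=> e; rewrite inE => /eqP ->.
Qed.

Lemma sum_R_extD x y : sum_R_ext R M x -> sum_R_ext R M y -> sum_R_ext R M (x + y).
Proof.
move=> [r [u [Rr [MSu ->]]]] [r' [u' [Rr' [MSu' ->]]]].
by exists (r + r'), (u + u'); split; [exact: subringD | split; [exact: ext_idealD | ring]].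
Qed.

Lemma sum_R_extN x : sum_R_ext R M x -> sum_R_ext R M (- x).
Proof.
move=> [r [u [Rr [MSu ->]]]].
by exists (- r), (- u); split; [exact: subringN | split; [exact: ext_idealN | ring]].
Qed.

Lemma sum_R_ext_R x : R x -> sum_R_ext R M x.
Proof. by move=> Rx; exists x, 0; split => //; split; [exact: ext_ideal0 | ring]. Qed.

Lemma sum_R_ext_ext x : ext_ideal M x -> sum_R_ext R M x.
Proof. by move=> MSx; exists 0, x; split; [exact: subring0 | split => //; ring]. Qed.

Lemma sum_R_extMz x n : sum_R_ext R M x -> sum_R_ext R M (x *~ n).
Proof.
have natP k : sum_R_ext R M x -> sum_R_ext R M (x *+ k).
  move=> Tx; elim: k => [|k IH]; first by rewrite mulr0n; exact/sum_R_ext_R/subring0.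
  by rewrite mulrS; apply: sum_R_extD.
by case: n => k Tx; [exact: natP | rewrite NegzE mulrNz; exact/sum_R_extN/natP].
Qed.

Fixpoint span_mod (L : seq S) : S -> Prop :=
  if L is s :: L' then fun x => exists r w, R r /\ span_mod L' w /\ x = w + r * s
  else ext_ideal M.

Lemma span_mod_ext L x : ext_ideal M x -> span_mod L x.
Proof.
elim: L x => [|s L IH] x MSx //=.
by exists 0, x; split; [exact: subring0 | split; [exact: IH | ring]].
Qed.

Lemma span_modD L x y : span_mod L x -> span_mod L y -> span_mod L (x + y).
Proof.
elim: L x y => [|s L IH] x y /=; first exact: ext_idealD.
move=> [r [w [Rr [Ww ->]]]] [r' [w' [Rr' [Ww' ->]]]].
by exists (r + r'), (w + w'); split; [exact: subringD | split; [exact: IH | ring]].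
Qed.

Lemma span_modMl L t x : R t -> span_mod L x -> span_mod L (t * x).
Proof.
move=> Rt; elim: L x => [|s L IH] x /=; first exact: ext_idealMl.
move=> [r [w [Rr [Ww ->]]]].
by exists (t * r), (t * w); split; [exact: (subringM hR) | split; [exact: IH | ring]].
Qed.

Lemma span_modB L x y : span_mod L x -> span_mod L y -> span_mod L (x - y).
Proof.
move=> Wx Wy; apply: span_modD => //.
by have := span_modMl (subringN (subring1 hR)) Wy; rewrite mulN1r.
Qed.

Lemma span_mod_mem L x : x \in L -> span_mod L x.
Proof.
elim: L => [|s L IH] //=; rewrite inE => /orP [/eqP ->|Lx].
  exists 1, 0; split; [exact: subring1 | split; [exact/span_mod_ext/ext_ideal0 | ring]].
by exists 0, x; split; [exact: subring0 | split; [exact: IH | ring]].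
Qed.

Lemma span_mod_cons L s x : span_mod L s -> span_mod (s :: L) x -> span_mod L x.
Proof. by move=> Ws [r [w [Rr [Ww ->]]]]; apply: span_modD => //; exact: span_modMl. Qed.

Section Maximal.
Hypothesis hM : is_maximal_ideal_of R M.

Lemma maximal_ideal_ideal : is_ideal_of R M.
Proof. by case: hM. Qed.

Lemma idealB x y : M x -> M y -> M (x - y).
Proof.
by move=> Mx My; apply: (idealD maximal_ideal_ideal) Mx _; exact: (idealN maximal_ideal_ideal).
Qed.

Lemma maximal_inv_mod r : R r -> ~ M r -> exists u m, R u /\ M m /\ 1 = m + u * r.
Proof.
move=> Rr nMr; have hI := maximal_ideal_ideal; case: hM => _ _ hmax.
pose J x := exists m u, M m /\ R u /\ x = m + u * r.
have hJ : is_ideal_of R J.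
  split.
  - move=> x [m [u [Mm [Ru ->]]]]; apply: subringD; first exact: (ideal_sub hI).
    exact: (subringM hR).
  - by exists 0, 0; split; [exact: (ideal0 hI) | split; [exact: subring0 | ring]].
  - move=> x y [m [u [Mm [Ru ->]]]] [m' [u' [Mm' [Ru' ->]]]].
    by exists (m + m'), (u + u'); split; [exact: (idealD hI) | split; [exact: subringD | ring]].
  - move=> x [m [u [Mm [Ru ->]]]].
    by exists (- m), (- u); split; [exact: (idealN hI) | split; [exact: subringN | ring]].
  - move=> t x Rt [m [u [Mm [Ru ->]]]].
    exists (t * m), (t * u); split; first exact: (idealMl hI).
    by split; [exact: (subringM hR) | ring].
have MJ x : M x -> J x by move=> Mx; exists x, 0; split => //; split; [exact: subring0 | ring].
case: (hmax J hJ MJ) => [JM | [m [u [Mm [Ru e]]]]]; last by exists u, m.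
exfalso; apply/nMr/JM.
by exists 0, 1; split; [exact: (ideal0 hI) | split; [exact: (subring1 hR) | ring]].
Qed.

Lemma span_mod_indep L s r : ~ span_mod L s -> R r -> span_mod L (r * s) -> M r.
Proof.
move=> nWs Rr Wrs; case: (classic (M r)) => // nMr; exfalso; apply: nWs.
have [u [m [Ru [Mm e]]]] := maximal_inv_mod Rr nMr.
have -> : s = m * s + u * (r * s) by rewrite mulrA -mulrDl -e mul1r.
by apply: span_modD; [exact/span_mod_ext/ext_ideal_gen | exact: span_modMl].
Qed.

(* phi : S -> R induces an (R/M)-linear functional on span_mod L / MS. *)
Definition functional_on (L : seq S) (phi : S -> S) :=
  [/\ forall x y, span_mod L x -> span_mod L y -> M (phi (x + y) - phi x - phi y),
      forall r x, R r -> span_mod L x -> M (phi (r * x) - r * phi x),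
      forall x, ext_ideal M x -> M (phi x) &
      forall x, R (phi x)].

Lemma functional_on_cons L phi s :
  span_mod L s -> functional_on L phi -> functional_on (s :: L) phi.
Proof.
move=> Ws [phiD phiZ phiMS phiR]; split => //.
- by move=> x y Wx Wy; apply: phiD; exact: span_mod_cons Ws _.
- by move=> r x Rr Wx; apply: phiZ => //; exact: span_mod_cons Ws _.
Qed.

(* Extension of phi to span_mod (s :: L), sending s to c: an element is
   decomposed (by choice) as w + r s and mapped to phi w + r c. *)
Definition extend_functional (L : seq S) (phi : S -> S) (s c x : S) : S :=
  match excluded_middle_informative
          (exists p : S * S, R p.1 /\ span_mod L p.2 /\ x = p.2 + p.1 * s) with
  | left H => let p := proj1_sig (constructive_indefinite_description _ H) in
              phi p.2 + p.1 * c
  | right _ => 0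
  end.

Lemma extend_functional_spec L phi s c x : span_mod (s :: L) x ->
  exists r w, [/\ R r, span_mod L w, x = w + r * s &
                  extend_functional L phi s c x = phi w + r * c].
Proof.
move=> [r [w [Rr [Ww e]]]]; rewrite /extend_functional.
case: excluded_middle_informative => [H|H]; last by exfalso; apply: H; exists (r, w).
by case: (constructive_indefinite_description _ H) => [[r1 w1] [? [? ?]]]; exists r1, w1.
Qed.

Lemma extend_functional_R L phi s c x :
  (forall y, R (phi y)) -> R c -> R (extend_functional L phi s c x).
Proof.
move=> phiR Rc; rewrite /extend_functional.
case: excluded_middle_informative => [H|H]; last exact: subring0.
case: (constructive_indefinite_description _ H) => [[r1 w1] [Rr1 _]] /=.
by apply: subringD => //; exact: (subringM hR).
Qed.

(* The extension is well defined modulo M: its value on w + r s does not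
   depend on the chosen decomposition, because s is independent of L. *)
Lemma extend_functional_value L phi s c w r :
  functional_on L phi -> ~ span_mod L s -> R c -> span_mod L w -> R r ->
  M (extend_functional L phi s c (w + r * s) - (phi w + r * c)).
Proof.
move=> [phiD _ phiMS _] nWs Rc Ww Rr; have hI := maximal_ideal_ideal.
have Wx : span_mod (s :: L) (w + r * s) by exists r, w.
have [r1 [w1 [Rr1 Ww1 e ->]]] := extend_functional_spec phi c Wx.
have e2 : (r - r1) * s = w1 - w.
  have -> : (r - r1) * s = (w + r * s) - w - r1 * s by ring.
  by rewrite e; ring.
have Mrr1 : M (r - r1).
  apply: (span_mod_indep nWs); first exact: (subringB hR).
  by rewrite e2; exact: span_modB.
have Mr1r : M (r1 - r) by rewrite -opprB; exact: (idealN hI).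
have MSww1 : ext_ideal M (w - w1).
  have -> : w - w1 = (r1 - r) * s by rewrite -[r1 - r]opprB mulNr e2 opprB.
  exact: ext_ideal_gen.
have phi_add := phiD _ _ Ww1 (span_modB Ww Ww1).
rewrite [w1 + _]addrC subrK in phi_add.
have phi_diff := phiMS _ MSww1.
have Mcr := idealMl hI Rc Mr1r.
have := idealD hI (idealD hI (idealN hI phi_add) (idealN hI phi_diff)) Mcr.
by congr M; ring.
Qed.

Lemma extend_functional_on L phi s c :
  functional_on L phi -> ~ span_mod L s -> R c ->
  functional_on (s :: L) (extend_functional L phi s c).
Proof.
move=> hphi nWs Rc; have hI := maximal_ideal_ideal.
have [phiD phiZ phiMS phiR] := hphi.
have value := extend_functional_value hphi nWs Rc.
split.
- move=> x y [r [w [Rr [Ww ->]]]] [r' [w' [Rr' [Ww' ->]]]].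
  have e_sum : w + w' + (r + r') * s = w + r * s + (w' + r' * s) by ring.
  have vxy := value _ _ (span_modD Ww Ww') (subringD Rr Rr'); rewrite e_sum in vxy.
  have := idealD hI (idealD hI (idealB vxy (value _ _ Ww Rr))
                             (idealN hI (value _ _ Ww' Rr'))) (phiD _ _ Ww Ww').
  by congr M; ring.
- move=> t x Rt [r [w [Rr [Ww ->]]]].
  have vtx := value _ _ (span_modMl Rt Ww) (subringM hR Rt Rr).
  rewrite -mulrA -mulrDr in vtx.
  have := idealD hI (idealB vtx (idealMl hI Rt (value _ _ Ww Rr))) (phiZ _ _ Rt Ww).
  by congr M; ring.
- move=> x MSx.
  have vx := value _ _ (span_mod_ext L MSx) subring0.
  rewrite mul0r addr0 in vx.
  by have := idealD hI vx (phiMS _ MSx); congr M; ring.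
- by move=> x; exact: extend_functional_R.
Qed.

(* If 1 is not in MS, every finite span containing 1 carries a functional
   with phi(1) = 1 modulo M; 1 is adjoined first, then the elements of L. *)
Lemma exists_functional L : ~ ext_ideal M 1 ->
  exists phi, functional_on (L ++ [:: 1]) phi /\ M (phi 1 - 1).
Proof.
move=> nMS1; have hI := maximal_ideal_ideal.
elim: L => [|s L [phi [hphi phi1]]] /=.
  have zero_on : functional_on [::] (fun _ => 0).
    by split=> *; rewrite ?subrr ?mulr0 ?subr0; solve [exact: (ideal0 hI) | exact: subring0].
  exists (extend_functional [::] (fun _ => 0) 1 1); split.
    by apply: extend_functional_on => //; exact: subring1.
  have := extend_functional_value zero_on nMS1 (subring1 hR) ext_ideal0 (subring1 hR).
  by rewrite add0r mulr1; congr M; ring.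
case: (classic (span_mod (L ++ [:: 1]) s)) => Ws.
  by exists phi; split => //; exact: functional_on_cons.
exists (extend_functional (L ++ [:: 1]) phi s 0); split.
  by apply: extend_functional_on => //; exact: subring0.
have W1 : span_mod (L ++ [:: 1]) 1 by apply: span_mod_mem; rewrite mem_cat mem_seq1 eqxx orbT.
have := idealD hI (extend_functional_value hphi Ws subring0 W1 subring0) phi1.
by rewrite mul0r addr0; congr M; ring.
Qed.

End Maximal.
End ModuleAlgebra.

Section FormalSums.
Variables (S : comPzRingType) (V : zmodType) (F : S * S -> V).

Definition eval_formal (l : seq (int * (S * S))) : V := \sum_(e <- l) F e.2 *~ e.1.

Lemma eval_formal_fcoef (l : seq (int * (S * S))) (P : seq (S * S)) :
  uniq P -> {subset map snd l <= P} -> eval_formal l = \sum_(p <- P) F p *~ fcoef l p.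
Proof.
move=> uP; elim: l => [|e l IH] lP.
  by rewrite /eval_formal big_nil; apply/esym/big1 => p _; rewrite /fcoef big_nil mulr0z.
have lP' : {subset map snd l <= P} by move=> x lx; apply: lP; rewrite /= inE lx orbT.
have Pe : e.2 \in P by apply: lP; rewrite /= inE eqxx.
rewrite /eval_formal big_cons -/(eval_formal l) (IH lP') /fcoef.
under [in RHS]eq_bigr => p _ do rewrite big_cons mulrzDr.
rewrite big_split /=; congr (_ + _).
rewrite (bigD1_seq e.2) //= eqxx big1 ?addr0 // => p ne_p.
by rewrite eq_sym (negbTE ne_p) mulr0z.
Qed.

Lemma eval_formal_comb (a b : seq (int * (S * S))) (gs : seq (int * seq (int * (S * S)))) :
  (forall p, fcoef a p - fcoef b p = \sum_(g <- gs) g.1 * fcoef g.2 p) ->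
  eval_formal a - eval_formal b = \sum_(g <- gs) eval_formal g.2 *~ g.1.
Proof.
move=> hc; pose A := a ++ b ++ flatten (map snd gs).
pose P := undup (map snd A).
have suppP l : {subset l <= A} -> {subset map snd l <= P}.
  by move=> lA x /mapP [e le ->]; rewrite mem_undup; apply/map_f/lA.
have uP : uniq P by exact: undup_uniq.
rewrite (eval_formal_fcoef uP (suppP a _)); last by move=> e ae; rewrite mem_cat ae.
rewrite (eval_formal_fcoef uP (suppP b _)); last by move=> e be; rewrite !mem_cat be orbT.
rewrite -sumrB; under eq_bigr => p _ do rewrite -mulrzBr hc mulrz_sumr.
rewrite exchange_big /=; apply: eq_big_seq => g gs_g.
rewrite (eval_formal_fcoef uP (suppP g.2 _)); last first.
  move=> e ge; rewrite !mem_cat; apply/orP; right; apply/orP; right.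
  by apply/flattenP; exists g.2 => //; exact: map_f.
by rewrite mulrz_suml; apply: eq_bigr => p _; rewrite -mulrzA mulrC.
Qed.

End FormalSums.

Section TensorEvaluation.
Variables (S : comPzRingType) (R M : S -> Prop) (L : seq S) (phi : S -> S).
Hypotheses (hR : is_subring R) (hphi : functional_on R M L phi).

Definition eval_phi (p : S * S) : S := phi p.1 * p.2.

Lemma eval_tensor_rel l : tensor_rel R l -> (forall e, e \in l -> span_mod R M L e.2.1) ->
  sum_R_ext R M (eval_formal eval_phi l).
Proof.
have [phiD phiZ _ _] := hphi.
case=> [x x' y | x y y' | r x y Rr] Wl;
  rewrite /eval_formal !big_cons big_nil /= !mulr1z !mulrN1z /eval_phi /=.
- have Wx : span_mod R M L x by apply: (Wl (-1, (x, y))); rewrite !inE eqxx orbT.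
  have Wx' : span_mod R M L x' by apply: (Wl (-1, (x', y))); rewrite !inE eqxx !orbT.
  apply: (sum_R_ext_ext hR); have := ext_ideal_gen y (phiD _ _ Wx Wx'); congr (ext_ideal M); ring.
- apply: (sum_R_ext_R M).
  have -> : phi x * (y + y') + (- (phi x * y) + (- (phi x * y') + 0)) = 0 by ring.
  exact: subring0.
- have Wx : span_mod R M L x by apply: (Wl (-1, (x, r * y))); rewrite !inE eqxx orbT.
  apply: (sum_R_ext_ext hR); have := ext_ideal_gen y (phiZ _ _ Rr Wx); congr (ext_ideal M); ring.
Qed.

Lemma eval_tensor_eq a b gs :
  (forall g, g \in gs -> tensor_rel R g.2) ->
  (forall p, fcoef a p - fcoef b p = \sum_(g <- gs) g.1 * fcoef g.2 p) ->
  (forall g e, g \in gs -> e \in g.2 -> span_mod R M L e.2.1) ->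
  sum_R_ext R M (eval_formal eval_phi a - eval_formal eval_phi b).
Proof.
move=> rel_gs hc W_gs; rewrite (eval_formal_comb eval_phi hc).
elim: gs rel_gs W_gs {hc} => [|g gs IH] rel_gs W_gs.
  by rewrite big_nil; exact: (sum_R_ext_R M (subring0 hR)).
rewrite big_cons; apply: (sum_R_extD hR).
  apply/(sum_R_extMz hR)/eval_tensor_rel; first by apply: rel_gs; rewrite inE eqxx.
  by move=> e; apply: W_gs; rewrite inE eqxx.
apply: IH => [g' gs_g' | g' e gs_g']; first by apply: rel_gs; rewrite inE gs_g' orbT.
by apply: W_gs; rewrite inE gs_g' orbT.
Qed.

End TensorEvaluation.

Theorem proposition2p2 (S : comPzRingType) (R : S -> Prop) (hR : is_subring R)
  (M : S -> Prop) (hM : is_maximal_ideal_of R M) (a : S) :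
  strict_closure R a -> sum_R_ext R M a.
Proof.
move=> [gs [rel_gs hc]].
case: (classic (ext_ideal M 1)) => [MS1 | nMS1].
  by apply: (sum_R_ext_ext hR); have := ext_idealMl a MS1; rewrite mulr1.
pose L := a :: flatten [seq [seq e.2.1 | e <- g.2] | g <- gs].
have [phi [hphi phi1]] := exists_functional hR hM L nMS1.
have W_gs g e : g \in gs -> e \in g.2 -> span_mod R M (L ++ [:: 1]) e.2.1.
  move=> gs_g ge; apply: span_mod_mem => //; rewrite mem_cat inE; apply/orP; left.
  by apply/orP; right; apply/flattenP; exists [seq e.2.1 | e <- g.2]; exact: map_f.
have := eval_tensor_eq hR hphi rel_gs hc W_gs.
rewrite /eval_formal !big_cons !big_nil /= !mulr1z /eval_phi /= => T_diff.
have [_ _ _ phiR] := hphi.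
(* a = phi(a) - (phi(a) - phi(1) a) - (phi(1) - 1) a, each term in R + MS. *)
have -> : a = phi a - (phi a * 1 + 0 - (phi 1 * a + 0)) - (phi 1 - 1) * a by ring.
apply: sum_R_extD => //; last exact/sum_R_extN/sum_R_ext_ext/ext_ideal_gen.
by apply: sum_R_extD => //; [exact: sum_R_ext_R | exact: sum_R_extN].
Qed.
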